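(* Consider the system \[ \begin{aligned} \dot S_h(t)&=\beta_h-C_{vh}\frac{I_v(t)}{N_v(t)}S_h(t)-\mu_hS_h(t),\\ \dot I_h(t)&=C_{vh}\frac{I_v(t-\tau)}{N_v(t-\tau)}S_h(t-\tau)-\mu_hI_h(t),\\ \dot S_v(t)&=\beta_v-C_{hv}I_h(t)S_v(t)-\mu_vS_v(t),\\ \dot I_v(t)&=C_{hv}I_h(t)S_v(t)-\mu_vI_v(t), \end{aligned} \] with $N_v=S_v+I_v$ and positive parameters $\beta_h,\beta_v,\mu_h,\mu_v,C_{vh},C_{hv}$. Let $R_0=\sqrt{C_{vh}C_{hv}\beta_h/(\mu_h^2\mu_v)}$. If $R_0>1$, then the unique endemic equilibrium $E^*$ (the unique equilibrium with all components positive) is locally asymptotically stable for any $\tau\ge0$.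
   Context: The phase space is $C_+=\{\varphi\in C([-\tau,0],\mathbb{R}_+^4):\varphi_3(\theta)+\varphi_4(\theta)>0\ \forall\theta\in[-\tau,0]\}$ with the sup-norm. *)

From Stdlib Require Import Reals.
Open Scope R_scope.

Definition basic_R0 (bh mh mv Cvh Chv : R) : R :=
  sqrt (Cvh * Chv * bh / (mh ^ 2 * mv)).

(* Right-hand sides of the system; the delayed quantities are passed as
   arguments (ivd, nvd, shd stand for I_v(t-tau), N_v(t-tau), S_h(t-tau)). *)
Definition f_Sh (bh mh Cvh : R) (sh sv iv : R) : R :=
  bh - Cvh * (iv / (sv + iv)) * sh - mh * sh.
Definition f_Ih (mh Cvh : R) (ih shd svd ivd : R) : R :=
  Cvh * (ivd / (svd + ivd)) * shd - mh * ih.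
Definition f_Sv (bv mv Chv : R) (ih sv : R) : R :=
  bv - Chv * ih * sv - mv * sv.
Definition f_Iv (mv Chv : R) (ih sv iv : R) : R :=
  Chv * ih * sv - mv * iv.

Definition endemic_equilibrium (bh bv mh mv Cvh Chv : R) (E : R * R * R * R) : Prop :=
  let '(sh, ih, sv, iv) := E in
  0 < sh /\ 0 < ih /\ 0 < sv /\ 0 < iv /\
  f_Sh bh mh Cvh sh sv iv = 0 /\
  f_Ih mh Cvh ih sh sv iv = 0 /\
  f_Sv bv mv Chv ih sv = 0 /\
  f_Iv mv Chv ih sv iv = 0.

Definition cont_from (a : R) (f : R -> R) : Prop :=
  forall t, a <= t -> forall eps, 0 < eps -> exists d, 0 < d /\
    forall s, a <= s -> Rabs (s - t) < d -> Rabs (f s - f t) < eps.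

Definition in_phase_space (tau : R) (Sh Ih Sv Iv : R -> R) : Prop :=
  forall th, -tau <= th <= 0 ->
    0 <= Sh th /\ 0 <= Ih th /\ 0 <= Sv th /\ 0 <= Iv th /\ 0 < Sv th + Iv th.

Definition is_solution (bh bv mh mv Cvh Chv tau : R) (Sh Ih Sv Iv : R -> R) : Prop :=
  cont_from (-tau) Sh /\ cont_from (-tau) Ih /\
  cont_from (-tau) Sv /\ cont_from (-tau) Iv /\
  forall t, 0 < t ->
    derivable_pt_lim Sh t (f_Sh bh mh Cvh (Sh t) (Sv t) (Iv t)) /\
    derivable_pt_lim Ih t
      (f_Ih mh Cvh (Ih t) (Sh (t - tau)) (Sv (t - tau)) (Iv (t - tau))) /\
    derivable_pt_lim Sv t (f_Sv bv mv Chv (Ih t) (Sv t)) /\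
    derivable_pt_lim Iv t (f_Iv mv Chv (Ih t) (Sv t) (Iv t)).

Definition close_to (E : R * R * R * R) (r a b c d : R) : Prop :=
  let '(sh, ih, sv, iv) := E in
  Rabs (a - sh) < r /\ Rabs (b - ih) < r /\ Rabs (c - sv) < r /\ Rabs (d - iv) < r.

(* Local asymptotic stability (Lyapunov stability + local attractivity) of E
   for the delay system with phase space C_+ and the sup-norm. *)
Definition locally_asymptotically_stable (bh bv mh mv Cvh Chv tau : R)
    (E : R * R * R * R) : Prop :=
  (forall eps, 0 < eps -> exists delta, 0 < delta /\
     forall Sh Ih Sv Iv : R -> R,
       is_solution bh bv mh mv Cvh Chv tau Sh Ih Sv Iv ->
       in_phase_space tau Sh Ih Sv Iv ->
       (forall th, -tau <= th <= 0 -> close_to E delta (Sh th) (Ih th) (Sv th) (Iv th)) ->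
       forall t, 0 <= t -> close_to E eps (Sh t) (Ih t) (Sv t) (Iv t))
  /\
  (exists b, 0 < b /\
     forall Sh Ih Sv Iv : R -> R,
       is_solution bh bv mh mv Cvh Chv tau Sh Ih Sv Iv ->
       in_phase_space tau Sh Ih Sv Iv ->
       (forall th, -tau <= th <= 0 -> close_to E b (Sh th) (Ih th) (Sv th) (Iv th)) ->
       forall eps, 0 < eps -> exists T, forall t, T <= t ->
         close_to E eps (Sh t) (Ih t) (Sv t) (Iv t)).

From Stdlib Require Import Reals Lra Psatz Classical.
Open Scope R_scope.

(* Let (Shs, Ihs, Svs, Ivs) be the endemic equilibrium, N = Svs + Ivs, x = Ih - Ihs and
   y = Iv - Ivs. The total vector population n = Sv + Iv - N and the quantity
   w(t) = Sh(t) + Ih(t + tau) - (Shs + Ihs) satisfy n' = -mv n and w' = -mh w exactly, so they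
   decay exponentially. The pair (x, y) obeys x' = -mh x + B y(t - tau) + ... and
   y' = -(Chv Ihs + mv) y + Chv Svs x + ... with B = Cvh Shs / N, and at the equilibrium
   B Chv Svs = mh mv < mh (Chv Ihs + mv). Hence some weight q has B q < mh and
   Chv Svs < (Chv Ihs + mv) q, and for a small rate k and a large gain K the envelopes
   |x| < K d e^(-kt), |y| < q K d e^(-kt) are never reached: at a first contact time the
   derivative points strictly inside. Sh and Sv are then recovered from w and n. *)

(** * Real functions on a half-line *)

Lemma cont_from_le a b f : a <= b -> cont_from a f -> cont_from b f.
Proof.
  intros Hab Hf t Ht eps Heps.
  destruct (Hf t ltac:(lra) eps Heps) as [d [Hd Hclose]].
  exists d; split; [exact Hd|]. intros s Hs. apply Hclose; lra.
Qed.

Lemma cont_from_plus a f g :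
  cont_from a f -> cont_from a g -> cont_from a (fun t => f t + g t).
Proof.
  intros Hf Hg t Ht eps Heps.
  destruct (Hf t Ht (eps / 2) ltac:(lra)) as [d1 [Hd1 H1]].
  destruct (Hg t Ht (eps / 2) ltac:(lra)) as [d2 [Hd2 H2]].
  exists (Rmin d1 d2); split; [now apply Rmin_pos|].
  intros s Hs Hst. pose proof (Rmin_l d1 d2). pose proof (Rmin_r d1 d2).
  specialize (H1 s Hs ltac:(lra)). specialize (H2 s Hs ltac:(lra)).
  replace (f s + g s - (f t + g t)) with ((f s - f t) + (g s - g t)) by ring.
  pose proof (Rabs_triang (f s - f t) (g s - g t)). lra.
Qed.

Lemma cont_from_opp a f : cont_from a f -> cont_from a (fun t => - f t).
Proof.
  intros Hf t Ht eps Heps. destruct (Hf t Ht eps Heps) as [d [Hd Hclose]].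
  exists d; split; [exact Hd|]. intros s Hs Hst.
  replace (- f s - - f t) with (- (f s - f t)) by ring. rewrite Rabs_Ropp; auto.
Qed.

Lemma cont_from_const a c : cont_from a (fun _ => c).
Proof.
  intros t Ht eps Heps. exists 1; split; [lra|]. intros s _ _.
  rewrite Rminus_diag, Rabs_R0; exact Heps.
Qed.

Lemma cont_from_abs a f : cont_from a f -> cont_from a (fun t => Rabs (f t)).
Proof.
  intros Hf t Ht eps Heps. destruct (Hf t Ht eps Heps) as [d [Hd Hclose]].
  exists d; split; [exact Hd|]. intros s Hs Hst.
  eapply Rle_lt_trans; [apply Rabs_triang_inv2|]. auto.
Qed.

Lemma cont_from_min a f g :
  cont_from a f -> cont_from a g -> cont_from a (fun t => Rmin (f t) (g t)).
Proof.
  intros Hf Hg t Ht eps Heps.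
  destruct (Hf t Ht eps Heps) as [d1 [Hd1 H1]].
  destruct (Hg t Ht eps Heps) as [d2 [Hd2 H2]].
  exists (Rmin d1 d2); split; [now apply Rmin_pos|].
  intros s Hs Hst. pose proof (Rmin_l d1 d2). pose proof (Rmin_r d1 d2).
  specialize (H1 s Hs ltac:(lra)). specialize (H2 s Hs ltac:(lra)).
  apply Rabs_def2 in H1. apply Rabs_def2 in H2.
  unfold Rmin; destruct (Rle_dec (f s) (g s)), (Rle_dec (f t) (g t));
    apply Rabs_def1; lra.
Qed.

Lemma cont_from_shift a c f : 0 <= c -> cont_from a f -> cont_from a (fun t => f (t + c)).
Proof.
  intros Hc Hf t Ht eps Heps. destruct (Hf (t + c) ltac:(lra) eps Heps) as [d [Hd Hclose]].
  exists d; split; [exact Hd|]. intros s Hs Hst. apply Hclose; [lra|].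
  now replace (s + c - (t + c)) with (s - t) by ring.
Qed.

Lemma continuity_cont_from a f : (forall t, continuity_pt f t) -> cont_from a f.
Proof.
  intros Hf t _ eps Heps. destruct (Hf t eps Heps) as [d [Hd Hclose]].
  exists d; split; [exact Hd|]. intros s _ Hst.
  destruct (Req_dec s t) as [->|Hne].
  - rewrite Rminus_diag, Rabs_R0; exact Heps.
  - apply (Hclose s). split; [split; [exact I | auto] | exact Hst].
Qed.

Lemma derivable_pt_lim_sub_const f c t l :
  derivable_pt_lim f t l -> derivable_pt_lim (fun s => f s - c) t l.
Proof.
  intros Hf. rewrite <- (Rminus_0_r l).
  apply (derivable_pt_lim_minus f (fct_cte c)); [exact Hf | apply derivable_pt_lim_const].
Qed.

Lemma derivable_pt_lim_shift f c t l :
  derivable_pt_lim f (t + c) l -> derivable_pt_lim (fun s => f (s + c)) t l.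
Proof.
  intros Hf. rewrite <- (Rmult_1_r l).
  apply (derivable_pt_lim_comp (fun s => s + c) f); [|exact Hf].
  rewrite <- (Rplus_0_r 1).
  apply (derivable_pt_lim_plus id (fct_cte c));
    [apply derivable_pt_lim_id | apply derivable_pt_lim_const].
Qed.

Lemma Rabs_le_inv x a : Rabs x <= a -> - a <= x <= a.
Proof.
  intros H. pose proof (Rle_abs x). pose proof (Rle_abs (- x)).
  rewrite Rabs_Ropp in *. lra.
Qed.

(** * Exponential envelopes and the barrier argument *)

Definition envelope (c k t : R) : R := c * exp (- k * t).

Lemma envelope_0 c k : envelope c k 0 = c.
Proof. unfold envelope. rewrite Rmult_0_r, exp_0. ring. Qed.

Lemma envelope_pos c k t : 0 < c -> 0 < envelope c k t.
Proof. intros Hc. apply Rmult_lt_0_compat; [exact Hc | apply exp_pos]. Qed.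

Lemma envelope_derive c k t : derivable_pt_lim (envelope c k) t (- k * envelope c k t).
Proof.
  unfold envelope.
  replace (- k * (c * exp (- k * t))) with (c * (exp (- k * t) * (- k * 1))) by ring.
  apply (derivable_pt_lim_scal (fun t => exp (- k * t))).
  apply (derivable_pt_lim_comp (fun t => - k * t) exp).
  - apply (derivable_pt_lim_scal id), derivable_pt_lim_id.
  - apply derivable_pt_lim_exp.
Qed.

Lemma envelope_cont a c k : cont_from a (envelope c k).
Proof.
  apply continuity_cont_from. intro t. apply derivable_continuous_pt.
  exists (- k * envelope c k t). apply envelope_derive.
Qed.

Lemma envelope_shift c k t tau : envelope c k (t - tau) = exp (k * tau) * envelope c k t.
Proof.
  unfold envelope. replace (- k * (t - tau)) with (k * tau + - k * t) by ring.
  rewrite exp_plus. ring.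
Qed.

Lemma exp_decay_le_1 k t : 0 <= k -> 0 <= t -> exp (- k * t) <= 1.
Proof.
  intros Hk Ht. rewrite <- exp_0.
  destruct (Req_dec (- k * t) 0) as [->|Hne]; [lra|].
  left. apply exp_increasing. nra.
Qed.

Lemma envelope_le c k t : 0 <= c -> 0 <= k -> 0 <= t -> envelope c k t <= c.
Proof.
  intros Hc Hk Ht. pose proof (exp_decay_le_1 k t Hk Ht). unfold envelope. nra.
Qed.

Lemma envelope_ge c k t : 0 <= c -> 0 <= k -> t <= 0 -> c <= envelope c k t.
Proof.
  intros Hc Hk Ht. unfold envelope.
  pose proof (exp_ineq1_le (- k * t)).
  assert (1 <= exp (- k * t)) by nra. nra.
Qed.

Lemma history_envelope_bound u c k s :
  0 < c -> 0 <= k -> (s < 0 -> Rabs u < c) -> (0 <= s -> Rabs u <= envelope c k s) ->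
  Rabs u <= envelope c k s /\ Rabs u <= c.
Proof.
  intros Hc Hk Hhist Hfwd. destruct (Rlt_dec s 0) as [Hs|Hs].
  - pose proof (envelope_ge c k s ltac:(lra) Hk ltac:(lra)). specialize (Hhist Hs). lra.
  - pose proof (envelope_le c k s ltac:(lra) Hk ltac:(lra)). specialize (Hfwd ltac:(lra)). lra.
Qed.

Lemma cont_from_pos_near a phi m :
  cont_from a phi -> a <= m -> 0 < phi m ->
  exists d, 0 < d /\ forall s, a <= s -> Rabs (s - m) < d -> 0 < phi s.
Proof.
  intros Hc Hm Hpos. destruct (Hc m Hm (phi m) Hpos) as [d [Hd Hclose]].
  exists d. split; [exact Hd|]. intros s Hs Hsm.
  specialize (Hclose s Hs Hsm). apply Rabs_def2 in Hclose. lra.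
Qed.

Lemma cont_first_zero phi T :
  cont_from 0 phi -> 0 < phi 0 -> 0 < T -> phi T <= 0 ->
  exists t1, 0 < t1 <= T /\ phi t1 = 0 /\ forall s, 0 <= s < t1 -> 0 < phi s.
Proof.
  intros Hc H0 HT HTn.
  set (P := fun s => 0 <= s <= T /\ forall r, 0 <= r <= s -> 0 < phi r).
  assert (HP0 : P 0).
  { split; [lra|]. intros r Hr. now replace r with 0 by lra. }
  destruct (completeness P) as [m [Hub Hlub]].
  { exists T. intros s [Hs _]. lra. }
  { now exists 0. }
  assert (Hm0 : 0 <= m) by now apply Hub.
  assert (HmT : m <= T) by (apply Hlub; intros s [Hs _]; lra).
  assert (Hbefore : forall s, 0 <= s < m -> 0 < phi s).
  { intros s Hs. apply NNPP. intros Hns. enough (m <= s) by lra.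
    apply Hlub. intros e [He Hpos]. destruct (Rle_dec e s) as [|Hse]; [assumption|].
    exfalso. apply Hns, Hpos. lra. }
  assert (Hge : 0 <= phi m).
  { apply Rnot_lt_le. intros Hlt.
    destruct (Req_dec m 0) as [->|Hm]; [lra|].
    destruct (cont_from_pos_near 0 (fun t => - phi t) m) as [d [Hd Hneg]];
      [apply cont_from_opp, Hc | exact Hm0 | lra |].
    set (s := Rmax 0 (m - d / 2)).
    assert (Hs : 0 <= s < m) by (unfold s, Rmax; destruct (Rle_dec 0 (m - d / 2)); lra).
    assert (Hsm : Rabs (s - m) < d)
      by (unfold s, Rmax; destruct (Rle_dec 0 (m - d / 2)); rewrite Rabs_left; lra).
    specialize (Hneg s ltac:(lra) Hsm). specialize (Hbefore s Hs). lra. }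
  assert (Hle : phi m <= 0).
  { apply Rnot_lt_le. intros Hlt.
    destruct (Req_dec m T) as [->|HmT']; [lra|].
    destruct (cont_from_pos_near 0 phi m Hc Hm0 Hlt) as [d [Hd Hpos]].
    set (s := Rmin T (m + d / 2)).
    assert (Hs : m < s <= T) by (unfold s, Rmin; destruct (Rle_dec T (m + d / 2)); lra).
    enough (P s) by (pose proof (Hub s H); lra).
    split; [lra|]. intros r Hr. destruct (Rlt_dec r m); [apply Hbefore; lra|].
    apply Hpos; [lra|].
    rewrite Rabs_right; unfold s, Rmin in *; destruct (Rle_dec T (m + d / 2)); lra. }
  assert (Hm : m <> 0) by (intros ->; lra).
  exists m. repeat split; auto; lra.
Qed.

Lemma first_zero_deriv_nonpos f t1 l a :
  derivable_pt_lim f t1 l -> f t1 = 0 -> a < t1 ->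
  (forall s, a <= s < t1 -> 0 < f s) -> l <= 0.
Proof.
  intros Hf Hz Ha Hpos. apply Rnot_lt_le. intros Hl.
  destruct (Hf (l / 2) ltac:(lra)) as [del Hdel].
  pose proof (cond_pos del) as Hdel0.
  pose proof (Rmin_l (del / 2) ((t1 - a) / 2)). pose proof (Rmin_r (del / 2) ((t1 - a) / 2)).
  assert (Hr : 0 < Rmin (del / 2) ((t1 - a) / 2)) by (apply Rmin_pos; lra).
  set (r := Rmin (del / 2) ((t1 - a) / 2)) in *.
  specialize (Hdel (- r) ltac:(lra) ltac:(rewrite Rabs_Ropp, Rabs_right; lra)).
  rewrite Hz, Rminus_0_r in Hdel. apply Rabs_def2 in Hdel.
  assert (Hq : f (t1 + - r) / - r < 0).
  { apply Rmult_pos_neg; [apply Hpos; lra | apply Rinv_lt_0_compat; lra]. }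
  lra.
Qed.

(* [f t * l + k * f t ^ 2 < 0] means [(f^2 e^(2 k t))' < 0]: at a contact point [f] moves
   strictly into the envelope [c e^(-k t)]. *)
Definition inward_at (k : R) (f : R -> R) (t : R) : Prop :=
  exists l, derivable_pt_lim f t l /\ f t * l + k * f t ^ 2 < 0.

Lemma envelope_touch_not_inward f c k t1 :
  0 < c -> 0 < t1 ->
  (forall s, 0 <= s < t1 -> Rabs (f s) < envelope c k s) ->
  Rabs (f t1) = envelope c k t1 -> ~ inward_at k f t1.
Proof.
  intros Hc Ht1 Hbefore Htouch [l [Hf Hin]].
  pose proof (envelope_pos c k t1 Hc) as Hpos.
  destruct (Rle_dec 0 (f t1)) as [Hnn|Hneg].
  - rewrite Rabs_right in Htouch by lra.
    enough (- k * envelope c k t1 - l <= 0) by nra.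
    apply (first_zero_deriv_nonpos (fun t => envelope c k t - f t) t1 _ 0); [| lra | lra |].
    + apply derivable_pt_lim_minus; [apply envelope_derive | exact Hf].
    + intros s Hs. specialize (Hbefore s Hs). apply Rabs_def2 in Hbefore. lra.
  - rewrite Rabs_left in Htouch by lra.
    enough (- k * envelope c k t1 + l <= 0) by nra.
    apply (first_zero_deriv_nonpos (fun t => envelope c k t + f t) t1 _ 0); [| lra | lra |].
    + apply derivable_pt_lim_plus; [apply envelope_derive | exact Hf].
    + intros s Hs. specialize (Hbefore s Hs). apply Rabs_def2 in Hbefore. lra.
Qed.

Lemma envelope_barrier2 (x y : R -> R) c1 c2 k :
  0 < c1 -> 0 < c2 -> cont_from 0 x -> cont_from 0 y ->
  Rabs (x 0) < c1 -> Rabs (y 0) < c2 ->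
  (forall t1, 0 < t1 ->
     (forall s, 0 <= s <= t1 -> Rabs (x s) <= envelope c1 k s /\ Rabs (y s) <= envelope c2 k s) ->
     (Rabs (x t1) = envelope c1 k t1 -> inward_at k x t1) /\
     (Rabs (y t1) = envelope c2 k t1 -> inward_at k y t1)) ->
  forall t, 0 <= t -> Rabs (x t) < envelope c1 k t /\ Rabs (y t) < envelope c2 k t.
Proof.
  intros Hc1 Hc2 Hx Hy Hx0 Hy0 Hinward T HT.
  apply NNPP. intros Hout.
  set (phi t := Rmin (envelope c1 k t - Rabs (x t)) (envelope c2 k t - Rabs (y t))).
  assert (Hphi : forall t, phi t <= envelope c1 k t - Rabs (x t) /\
                          phi t <= envelope c2 k t - Rabs (y t) /\
                          (phi t = envelope c1 k t - Rabs (x t) \/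
                           phi t = envelope c2 k t - Rabs (y t))).
  { intros t. unfold phi, Rmin. destruct (Rle_dec _ _); lra. }
  assert (Hphi0 : 0 < phi 0).
  { destruct (Hphi 0) as [H1 [H2 [H3|H3]]]; rewrite H3, envelope_0; lra. }
  assert (HT0 : 0 < T).
  { destruct (Req_dec T 0) as [->|]; [|lra]. exfalso. apply Hout. rewrite !envelope_0. lra. }
  assert (HphiT : phi T <= 0).
  { destruct (Hphi T) as [H1 [H2 _]]. apply Rnot_lt_le. intros Hpos. apply Hout. lra. }
  assert (Hcont : cont_from 0 phi).
  { apply cont_from_min; apply cont_from_plus;
      auto using envelope_cont, cont_from_opp, cont_from_abs. }
  destruct (cont_first_zero phi T Hcont Hphi0 HT0 HphiT) as [t1 [Ht1 [Hz Hbefore]]].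
  assert (Hbefore' : forall s, 0 <= s < t1 ->
            Rabs (x s) < envelope c1 k s /\ Rabs (y s) < envelope c2 k s).
  { intros s Hs. specialize (Hbefore s Hs). destruct (Hphi s) as [H1 [H2 _]]. lra. }
  destruct (Hinward t1 ltac:(lra)) as [Hinx Hiny].
  { intros s Hs. destruct (Req_dec s t1) as [->|Hne].
    - destruct (Hphi t1) as [H1 [H2 _]]. lra.
    - destruct (Hbefore' s ltac:(lra)). lra. }
  destruct (Hphi t1) as [H1 [H2 [H3|H3]]].
  - apply (envelope_touch_not_inward x c1 k t1); try lra.
    + intros s Hs. apply Hbefore', Hs.
    + apply Hinx. lra.
  - apply (envelope_touch_not_inward y c2 k t1); try lra.
    + intros s Hs. apply Hbefore', Hs.
    + apply Hiny. lra.
Qed.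

Lemma envelope_barrier (x : R -> R) c k :
  0 < c -> cont_from 0 x -> Rabs (x 0) < c ->
  (forall t1, 0 < t1 -> Rabs (x t1) = envelope c k t1 -> inward_at k x t1) ->
  forall t, 0 <= t -> Rabs (x t) < envelope c k t.
Proof.
  intros Hc Hx Hx0 Hinward t Ht.
  apply (envelope_barrier2 x x c c k Hc Hc Hx Hx Hx0 Hx0); [|exact Ht].
  intros t1 Ht1 _. split; apply Hinward, Ht1.
Qed.

Lemma linear_decay_bound f m k c :
  k < m -> cont_from 0 f -> (forall t, 0 < t -> derivable_pt_lim f t (- m * f t)) ->
  Rabs (f 0) < c -> forall t, 0 <= t -> Rabs (f t) < envelope c k t.
Proof.
  intros Hkm Hcont Hder Hf0.
  apply envelope_barrier; [pose proof (Rabs_pos (f 0)); lra | exact Hcont | exact Hf0 |].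
  intros t1 Ht1 Htouch. exists (- m * f t1). split; [now apply Hder|].
  assert (Hpos : 0 < Rabs (f t1)).
  { rewrite Htouch. apply envelope_pos. pose proof (Rabs_pos (f 0)). lra. }
  assert (0 < f t1 ^ 2) by (rewrite <- pow2_abs; nra).
  nra.
Qed.

(** * The endemic equilibrium *)

Definition endemic_relations (bh bv mh mv Cvh Chv Shs Ihs Svs Ivs : R) : Prop :=
  0 < Shs /\ 0 < Ihs /\ 0 < Svs /\ 0 < Ivs /\
  bh = mh * (Shs + Ihs) /\ bv = mv * (Svs + Ivs) /\
  Cvh * Ivs * Shs = mh * Ihs * (Svs + Ivs) /\ Chv * Ihs * Svs = mv * Ivs.

Lemma endemic_equilibrium_relations bh bv mh mv Cvh Chv Shs Ihs Svs Ivs :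
  endemic_equilibrium bh bv mh mv Cvh Chv (Shs, Ihs, Svs, Ivs) <->
  endemic_relations bh bv mh mv Cvh Chv Shs Ihs Svs Ivs.
Proof.
  unfold endemic_equilibrium, endemic_relations, f_Sh, f_Ih, f_Sv, f_Iv.
  split; intros [HShs [HIhs [HSvs [HIvs [H1 [H2 [H3 H4]]]]]]].
  - assert (Hinc : Cvh * (Ivs / (Svs + Ivs)) * Shs * (Svs + Ivs) = Cvh * Ivs * Shs) by (field; lra).
    repeat split; try lra. rewrite <- Hinc. nra.
  - assert (Hinc : Cvh * (Ivs / (Svs + Ivs)) * Shs = mh * Ihs).
    { apply (Rmult_eq_reg_r (Svs + Ivs)); [|lra].
      replace (Cvh * (Ivs / (Svs + Ivs)) * Shs * (Svs + Ivs)) with (Cvh * Ivs * Shs)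
        by (field; lra).
      exact H3. }
    repeat split; lra.
Qed.

Lemma endemic_relations_I bh bv mh mv Cvh Chv Shs Ihs Svs Ivs :
  endemic_relations bh bv mh mv Cvh Chv Shs Ihs Svs Ivs -> Cvh * Chv * Shs = mh * (Chv * Ihs + mv).
Proof.
  intros [HShs [HIhs [HSvs [HIvs [_ [_ [H3 H4]]]]]]].
  apply (Rmult_eq_reg_l (Ihs * Ivs * (Svs + Ivs)));
    [|apply Rgt_not_eq; repeat apply Rmult_lt_0_compat; lra].
  replace (Ihs * Ivs * (Svs + Ivs) * (Cvh * Chv * Shs))
    with (Cvh * Ivs * Shs * (Chv * Ihs * (Svs + Ivs))) by ring.
  replace (Chv * Ihs * (Svs + Ivs)) with (Ivs * (Chv * Ihs + mv)) by nra.
  rewrite H3. ring.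
Qed.

Lemma endemic_relations_unique bh bv mh mv Cvh Chv Shs Ihs Svs Ivs Shs' Ihs' Svs' Ivs' :
  0 < mh -> 0 < mv -> 0 < Cvh -> 0 < Chv ->
  endemic_relations bh bv mh mv Cvh Chv Shs Ihs Svs Ivs ->
  endemic_relations bh bv mh mv Cvh Chv Shs' Ihs' Svs' Ivs' ->
  Shs' = Shs /\ Ihs' = Ihs /\ Svs' = Svs /\ Ivs' = Ivs.
Proof.
  intros Hmh Hmv HCvh HChv Hrel Hrel'.
  pose proof (endemic_relations_I _ _ _ _ _ _ _ _ _ _ Hrel) as HSI.
  pose proof (endemic_relations_I _ _ _ _ _ _ _ _ _ _ Hrel') as HSI'.
  destruct Hrel as [HShs [HIhs [HSvs [HIvs [H1 [H2 [H3 H4]]]]]]].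
  destruct Hrel' as [HShs' [HIhs' [HSvs' [HIvs' [H1' [H2' [H3' H4']]]]]]].
  assert (Hhost : Shs + Ihs = Shs' + Ihs') by (apply (Rmult_eq_reg_l mh); lra).
  assert (Hvector : Svs + Ivs = Svs' + Ivs') by (apply (Rmult_eq_reg_l mv); lra).
  assert (HI_eq : Ihs' = Ihs).
  { assert (HZ : (Ihs' - Ihs) * (Cvh * Chv + mh * Chv) = 0) by nra.
    apply Rmult_integral in HZ. destruct HZ as [HZ|HZ]; nra. }
  subst Ihs'.
  assert (HV_eq : Ivs' = Ivs).
  { apply (Rmult_eq_reg_r (Chv * Ihs + mv)); nra. }
  subst Ivs'. repeat split; lra.
Qed.

Lemma endemic_relations_exist bh bv mh mv Cvh Chv :
  0 < bh -> 0 < bv -> 0 < mh -> 0 < mv -> 0 < Cvh -> 0 < Chv ->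
  1 < basic_R0 bh mh mv Cvh Chv ->
  exists Shs Ihs Svs Ivs, endemic_relations bh bv mh mv Cvh Chv Shs Ihs Svs Ivs.
Proof.
  intros Hbh Hbv Hmh Hmv HCvh HChv HR0.
  assert (HR : mh * mv < Cvh * Chv * bh / mh).
  { unfold basic_R0 in HR0. rewrite <- sqrt_1 in HR0. apply sqrt_lt_0_alt in HR0.
    assert (Hden : 0 < mh ^ 2 * mv) by (apply Rmult_lt_0_compat; [apply pow_lt|]; lra).
    apply (Rmult_lt_compat_r (mh ^ 2 * mv)) in HR0; [|exact Hden].
    replace (Cvh * Chv * bh / (mh ^ 2 * mv) * (mh ^ 2 * mv)) with (Cvh * Chv * bh)
      in HR0 by (field; lra).
    apply (Rmult_lt_reg_r mh); [exact Hmh|].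
    replace (Cvh * Chv * bh / mh * mh) with (Cvh * Chv * bh) by (field; lra). lra. }
  (* [Ihs] solves endemic_relations_I with [Shs = bh / mh - Ihs]. *)
  set (Ihs := (Cvh * Chv * bh / mh - mh * mv) / (Chv * (mh + Cvh))).
  assert (HIhs : 0 < Ihs) by (apply Rdiv_lt_0_compat; nra).
  assert (HCI : 0 < Chv * Ihs + mv) by nra.
  assert (HN : 0 < bv / mv) by (apply Rdiv_lt_0_compat; lra).
  exists (mh * (Chv * Ihs + mv) / (Cvh * Chv)), Ihs,
    (mv * (bv / mv) / (Chv * Ihs + mv)), (Chv * Ihs * (bv / mv) / (Chv * Ihs + mv)).
  repeat split.
  - apply Rdiv_lt_0_compat; nra.
  - exact HIhs.
  - apply Rdiv_lt_0_compat; nra.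
  - apply Rdiv_lt_0_compat; [apply Rmult_lt_0_compat|]; nra.
  - unfold Ihs. field. lra.
  - field. lra.
  - field. lra.
  - field. lra.
Qed.

(** * Estimates at a contact time *)

Lemma f_Ih_deviation mh Cvh Shs Ihs Ivs N ih sd svd ivd :
  N <> 0 -> svd + ivd <> 0 -> Cvh * Ivs * Shs = mh * Ihs * N ->
  f_Ih mh Cvh ih sd svd ivd =
    - (Cvh * (ivd / (svd + ivd)) + mh) * (ih - Ihs) + Cvh * Shs / N * (ivd - Ivs)
    - Cvh * Shs / N * (ivd / (svd + ivd)) * (svd + ivd - N)
    + Cvh * (ivd / (svd + ivd)) * (sd - Shs + (ih - Ihs)).
Proof.
  intros HN Hn HIh. unfold f_Ih.
  assert (HmI : mh * Ihs = Cvh * Shs / N * Ivs).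
  { apply (Rmult_eq_reg_r N); [|exact HN].
    replace (Cvh * Shs / N * Ivs * N) with (Cvh * Ivs * Shs) by (field; exact HN). lra. }
  apply Rminus_diag_uniq. rewrite <- (Rminus_diag_eq _ _ (eq_sym HmI)).
  field. split; assumption.
Qed.

Lemma f_Iv_deviation mv Chv Ihs Svs Ivs ih sv iv :
  Chv * Ihs * Svs = mv * Ivs ->
  f_Iv mv Chv ih sv iv =
    - (Chv * (Ihs + (ih - Ihs)) + mv) * (iv - Ivs)
    + Chv * (Svs + (sv + iv - (Svs + Ivs))) * (ih - Ihs) + Chv * Ihs * (sv + iv - (Svs + Ivs)).
Proof. intros HIv. unfold f_Iv. nra. Qed.

Lemma incidence_bounds V N iv n :
  0 < V -> 0 < N -> Rabs (iv - V) <= V / 2 -> Rabs (n - N) <= N / 4 ->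
  0 <= iv / n <= 2 * (V / N).
Proof.
  intros HV HN Hiv Hn. apply Rabs_le_inv in Hiv, Hn.
  split.
  - apply Rle_mult_inv_pos; lra.
  - apply (Rmult_le_reg_r (n * N)); [nra|].
    replace (iv / n * (n * N)) with (iv * N) by (field; lra).
    replace (2 * (V / N) * (n * N)) with (2 * V * n) by (field; lra).
    nra.
Qed.

Lemma host_inward_estimate mh Cvh k a G q K d E e x y n om g :
  0 < Cvh -> 0 < a -> 0 < K -> 0 < d -> 0 <= E -> 0 < e -> 0 <= g <= G ->
  Rabs x = K * d * e -> Rabs y <= q * K * d * E * e -> Rabs n <= 2 * d * E * e ->
  Rabs om <= (d * E + K * d) * e ->
  E * (a * q * K + 2 * a * G + Cvh * G) < (mh - k) * K ->
  x * (- (Cvh * g + mh) * x + a * y - a * g * n + Cvh * g * om) + k * x ^ 2 < 0.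
Proof.
  intros HCvh Ha HK Hd HE He Hg Hx Hy Hn Hom Hmargin.
  set (P := Rabs x) in *.
  assert (HP : 0 < P) by (rewrite Hx; repeat apply Rmult_lt_0_compat; lra).
  assert (Hxy : x * y <= P * (q * K * d * E * e)).
  { apply (Rle_trans _ (P * Rabs y)); [unfold P; rewrite <- Rabs_mult; apply Rle_abs|].
    apply Rmult_le_compat_l; lra. }
  assert (Hxn : - (x * n) <= P * (2 * d * E * e)).
  { apply (Rle_trans _ (P * Rabs n));
      [unfold P; rewrite <- Rabs_mult, <- Rabs_Ropp; apply Rle_abs|].
    apply Rmult_le_compat_l; lra. }
  assert (Hxom : x * om <= P * ((d * E + K * d) * e)).
  { apply (Rle_trans _ (P * Rabs om)); [unfold P; rewrite <- Rabs_mult; apply Rle_abs|].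
    apply Rmult_le_compat_l; lra. }
  replace (x * (- (Cvh * g + mh) * x + a * y - a * g * n + Cvh * g * om) + k * x ^ 2)
    with (- (Cvh * g + mh - k) * P ^ 2 + a * (x * y) + a * g * (- (x * n)) + Cvh * g * (x * om))
    by (unfold P; rewrite pow2_abs; ring).
  assert (Hfactor : - (mh - k) * P ^ 2 + a * (P * (q * K * d * E * e))
                    + a * G * (P * (2 * d * E * e)) + Cvh * G * (P * (d * E * e))
                    = P * d * e * (E * (a * q * K + 2 * a * G + Cvh * G) - (mh - k) * K))
    by (rewrite Hx; ring).
  assert (0 < P * d * e) by (repeat apply Rmult_lt_0_compat; lra).
  assert (a * (x * y) <= a * (P * (q * K * d * E * e))) by (apply Rmult_le_compat_l; lra).
  assert (a * g * (- (x * n)) <= a * G * (P * (2 * d * E * e))).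
  { apply (Rle_trans _ (a * g * (P * (2 * d * E * e)))).
    - apply Rmult_le_compat_l; nra.
    - apply Rmult_le_compat_r; nra. }
  assert (Cvh * g * (x * om) <= Cvh * g * (P * ((d * E + K * d) * e)))
    by (apply Rmult_le_compat_l; nra).
  assert (Cvh * g * (P * (d * E * e)) <= Cvh * G * (P * (d * E * e))).
  { apply Rmult_le_compat_r; [|nra]. repeat apply Rmult_le_pos; lra. }
  assert (Cvh * g * (P * ((d * E + K * d) * e)) = Cvh * g * P ^ 2 + Cvh * g * (P * (d * E * e)))
    by (rewrite Hx; ring).
  nra.
Qed.

Lemma vector_inward_estimate Chv mv k Ihs Svs q K d e y x n :
  0 < Chv -> 0 < Ihs -> 0 < Svs -> 0 < q -> 0 < K -> 0 < d -> 0 < e -> e <= 1 ->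
  Rabs y = q * K * d * e -> Rabs x <= K * d * e -> Rabs n <= 2 * d * e ->
  Chv * (Svs + 2 * d) * K + 2 * Chv * Ihs < (Chv * (Ihs - K * d) + mv - k) * q * K ->
  y * (- (Chv * (Ihs + x) + mv) * y + Chv * (Svs + n) * x + Chv * Ihs * n) + k * y ^ 2 < 0.
Proof.
  intros HChv HIhs HSvs Hq HK Hd He He1 Hy Hx Hn Hmargin.
  set (Q := Rabs y) in *.
  assert (HQ : 0 < Q) by (rewrite Hy; repeat apply Rmult_lt_0_compat; lra).
  pose proof (Rabs_le_inv _ _ Hx) as Hx'. pose proof (Rabs_le_inv _ _ Hn) as Hn'.
  assert (Hxy : (Svs + n) * x * y <= (Svs + 2 * d) * (K * d * e) * Q).
  { apply (Rle_trans _ (Rabs (Svs + n) * Rabs x * Q)).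
    - unfold Q. rewrite <- !Rabs_mult. apply Rle_abs.
    - apply Rmult_le_compat_r; [lra|].
      apply Rmult_le_compat; try apply Rabs_pos; [|exact Hx].
      apply Rabs_le. nra. }
  assert (Hny : n * y <= 2 * d * e * Q).
  { apply (Rle_trans _ (Rabs n * Q)); [unfold Q; rewrite <- Rabs_mult; apply Rle_abs|].
    apply Rmult_le_compat_r; lra. }
  replace (y * (- (Chv * (Ihs + x) + mv) * y + Chv * (Svs + n) * x + Chv * Ihs * n) + k * y ^ 2)
    with (- (Chv * (Ihs + x) + mv - k) * Q ^ 2 + Chv * ((Svs + n) * x * y) + Chv * Ihs * (n * y))
    by (unfold Q; rewrite pow2_abs; ring).
  assert (Hfactor : - (Chv * (Ihs - K * d) + mv - k) * Q ^ 2
                    + Chv * ((Svs + 2 * d) * (K * d * e) * Q) + Chv * Ihs * (2 * d * e * Q)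
                    = Q * d * e * (Chv * (Svs + 2 * d) * K + 2 * Chv * Ihs
                                   - (Chv * (Ihs - K * d) + mv - k) * q * K))
    by (rewrite Hy; ring).
  assert (0 < Q * d * e) by (repeat apply Rmult_lt_0_compat; lra).
  assert (Chv * (x + K * d) * Q ^ 2 >= 0) by (apply Rle_ge; repeat apply Rmult_le_pos; nra).
  assert (Chv * ((Svs + n) * x * y) <= Chv * ((Svs + 2 * d) * (K * d * e) * Q))
    by (apply Rmult_le_compat_l; lra).
  assert (Chv * Ihs * (n * y) <= Chv * Ihs * (2 * d * e * Q)) by (apply Rmult_le_compat_l; nra).
  nra.
Qed.

(** * Choice of the constants *)

Lemma exists_between_ratios a b c m :
  0 < a -> 0 <= b -> 0 < c -> 0 < m -> a * b < m * c ->
  exists q, 0 < q /\ a * q < m /\ b < c * q.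
Proof.
  intros Ha Hb Hc Hm Habc.
  assert (Hlt : b / c < m / a).
  { apply (Rmult_lt_reg_r (a * c)); [nra|].
    replace (b / c * (a * c)) with (a * b) by (field; lra).
    replace (m / a * (a * c)) with (m * c) by (field; lra). exact Habc. }
  assert (Hbc : 0 <= b / c) by (apply Rle_mult_inv_pos; assumption).
  exists ((b / c + m / a) / 2). repeat split.
  - lra.
  - apply (Rmult_lt_reg_r (/ a)); [apply Rinv_0_lt_compat, Ha|].
    replace (a * ((b / c + m / a) / 2) * / a) with ((b / c + m / a) / 2) by (field; lra).
    replace (m * / a) with (m / a) by reflexivity. lra.
  - apply (Rmult_lt_reg_r (/ c)); [apply Rinv_0_lt_compat, Hc|].
    replace (c * ((b / c + m / a) / 2) * / c) with ((b / c + m / a) / 2) by (field; lra).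
    replace (b * / c) with (b / c) by reflexivity. lra.
Qed.

Lemma exists_large_gain q X Y A B :
  0 < q -> 0 < X -> 0 < Y -> 0 <= A -> 0 <= B ->
  exists K, 1 < K /\ 1 < q * K /\ A < K * X /\ B < K * Y.
Proof.
  intros Hq HX HY HA HB.
  assert (H1 : 0 < 2 / q) by (apply Rdiv_lt_0_compat; lra).
  assert (H2 : 0 <= A / X) by (apply Rle_mult_inv_pos; assumption).
  assert (H3 : 0 <= B / Y) by (apply Rle_mult_inv_pos; assumption).
  exists (2 + 2 / q + A / X + B / Y). repeat split.
  - lra.
  - assert (q * (2 / q) = 2) by (field; lra). nra.
  - assert (A / X * X = A) by (field; lra). nra.
  - assert (B / Y * Y = B) by (field; lra). nra.
Qed.

Lemma exists_small_rate tau sig r :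
  0 <= tau -> 0 < sig -> 0 < r -> exists k, 0 < k <= r /\ exp (k * tau) <= 1 + sig.
Proof.
  intros Htau Hsig Hr.
  assert (Hln : 0 < ln (1 + sig)) by (rewrite <- ln_1; apply ln_increasing; lra).
  set (k := Rmin r (ln (1 + sig) / (tau + 1))).
  assert (Hk : 0 < k) by (apply Rmin_pos; [lra | apply Rdiv_lt_0_compat; lra]).
  exists k. split; [split; [exact Hk | apply Rmin_l]|].
  rewrite <- (exp_ln (1 + sig)) by lra.
  left. apply exp_increasing.
  assert (k * (tau + 1) <= ln (1 + sig)).
  { pose proof (Rmin_r r (ln (1 + sig) / (tau + 1))) as Hkr. fold k in Hkr.
    apply (Rmult_le_compat_r (tau + 1)) in Hkr; [|lra].
    replace (ln (1 + sig) / (tau + 1) * (tau + 1)) with (ln (1 + sig)) in Hkr by (field; lra).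
    exact Hkr. }
  nra.
Qed.

Lemma exists_small_radius a1 b1 a2 b2 a3 b3 :
  0 < a1 -> 0 < b1 -> 0 < a2 -> 0 < b2 -> 0 < a3 -> 0 < b3 ->
  exists d0, 0 < d0 /\ forall d, 0 < d -> d <= d0 ->
    d * a1 <= b1 /\ d * a2 <= b2 /\ d * a3 <= b3.
Proof.
  intros Ha1 Hb1 Ha2 Hb2 Ha3 Hb3.
  assert (Hratio : forall a b d, 0 < a -> d <= b / a -> d * a <= b).
  { intros a b d Ha Hd. apply (Rmult_le_compat_r a) in Hd; [|lra].
    replace (b / a * a) with b in Hd by (field; lra). exact Hd. }
  exists (Rmin (b1 / a1) (Rmin (b2 / a2) (b3 / a3))). split.
  - repeat apply Rmin_pos; apply Rdiv_lt_0_compat; assumption.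
  - intros d _ Hd. pose proof (Rmin_l (b1 / a1) (Rmin (b2 / a2) (b3 / a3))).
    pose proof (Rmin_r (b1 / a1) (Rmin (b2 / a2) (b3 / a3))).
    pose proof (Rmin_l (b2 / a2) (b3 / a3)). pose proof (Rmin_r (b2 / a2) (b3 / a3)).
    repeat split; apply Hratio; lra.
Qed.

Lemma host_margin mh k aq c K E :
  0 < aq -> aq < mh -> 0 <= c -> c < K * ((mh - aq) / 4) -> 0 < K ->
  k <= (mh - aq) / 4 -> 0 < E -> E <= 1 + (mh - aq) / (4 * mh) ->
  E * (aq * K + c) < (mh - k) * K.
Proof.
  intros Haq Hmh Hc HcK HK Hk HE HE1.
  set (X := mh - aq) in *. assert (HX : 0 < X < mh) by (unfold X; lra).
  assert (Hsig : 0 < X / (4 * mh)) by (apply Rdiv_lt_0_compat; lra).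
  assert (Hsig_mh : X / (4 * mh) * mh = X / 4) by (field; lra).
  apply (Rlt_le_trans _ (E * ((mh - 3 * X / 4) * K))).
  - apply Rmult_lt_compat_l; [exact HE|].
    replace aq with (mh - X) by (unfold X; ring). lra.
  - apply (Rle_trans _ ((1 + X / (4 * mh)) * ((mh - 3 * X / 4) * K))).
    + apply Rmult_le_compat_r; [nra | exact HE1].
    + assert (Hgap : (1 + X / (4 * mh)) * (mh - 3 * X / 4) <= mh - k) by nra.
      rewrite <- Rmult_assoc. apply Rmult_le_compat_r; lra.
Qed.

(* The two margin inequalities make the envelopes [K d e^(-k t)] of [Ih - Ihs] and
   [q K d e^(-k t)] of [Iv - Ivs] inward (see host_inward_estimate and vector_inward_estimate);
   the last two keep the delayed incidence [Iv / (Sv + Iv)] between 0 and [2 Ivs / (Svs + Ivs)]. *)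
Definition decay_constants (mh mv Cvh Chv Shs Ihs Svs Ivs tau q K k d : R) : Prop :=
  0 < q /\ 1 < K /\ 1 < q * K /\ 0 < k /\ k < mv /\ k < mh /\
  exp (k * tau) * (Cvh * Shs / (Svs + Ivs) * q * K
                   + 2 * (Cvh * Shs / (Svs + Ivs)) * (2 * (Ivs / (Svs + Ivs)))
                   + Cvh * (2 * (Ivs / (Svs + Ivs)))) < (mh - k) * K /\
  0 < d /\ Chv * (Svs + 2 * d) * K + 2 * Chv * Ihs < (Chv * (Ihs - K * d) + mv - k) * q * K /\
  8 * d <= Svs + Ivs /\ q * K * d <= Ivs / 2.

Lemma decay_constants_exist mh mv Cvh Chv Shs Ihs Svs Ivs tau :
  0 < mh -> 0 < mv -> 0 < Cvh -> 0 < Chv -> 0 < Shs -> 0 < Ihs -> 0 < Svs -> 0 < Ivs -> 0 <= tau ->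
  Cvh * Ivs * Shs = mh * Ihs * (Svs + Ivs) -> Chv * Ihs * Svs = mv * Ivs ->
  exists q K k d0, 0 < d0 /\
    forall d, 0 < d -> d <= d0 -> decay_constants mh mv Cvh Chv Shs Ihs Svs Ivs tau q K k d.
Proof.
  intros Hmh Hmv HCvh HChv HShs HIhs HSvs HIvs Htau HIh HIv.
  set (N := Svs + Ivs). assert (HN : 0 < N) by (unfold N; lra).
  set (a := Cvh * Shs / N). assert (Ha : 0 < a) by (apply Rdiv_lt_0_compat; nra).
  set (G := 2 * (Ivs / N)).
  assert (HG : 0 < G) by (unfold G; assert (0 < Ivs / N) by (apply Rdiv_lt_0_compat; lra); lra).
  assert (Hcoupling : a * (Chv * Svs) = mh * mv).
  { apply (Rmult_eq_reg_l (Ivs * Ihs)); [|nra].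
    replace (Ivs * Ihs * (a * (Chv * Svs))) with (Cvh * Ivs * Shs * (Chv * Ihs * Svs) / N)
      by (unfold a; field; lra).
    rewrite HIh, HIv. unfold N. field. lra. }
  assert (HChvI : 0 < Chv * Ihs) by nra.
  destruct (exists_between_ratios a (Chv * Svs) (Chv * Ihs + mv) mh) as [q [Hq [Hhost Hvector]]];
    [lra | nra | lra | lra | rewrite Hcoupling; nra |].
  set (Xs := mh - a * q). set (Ys := (Chv * Ihs + mv) * q - Chv * Svs).
  assert (HXs : 0 < Xs) by (unfold Xs; lra). assert (HYs : 0 < Ys) by (unfold Ys; lra).
  assert (HXmh : Xs < mh) by (unfold Xs; nra).
  destruct (exists_large_gain q (Xs / 4) Ys (2 * a * G + Cvh * G) (4 * Chv * Ihs))
    as [K [HK [HqK [HKX HKY]]]]; [lra | lra | lra | nra | nra |].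
  destruct (exists_small_rate tau (Xs / (4 * mh)) (Rmin (mv / 2) (Rmin (Xs / 4) (Ys / (8 * q)))))
    as [k [[Hk Hkr] Hexp]];
    [lra | apply Rdiv_lt_0_compat; lra | repeat apply Rmin_pos; apply Rdiv_lt_0_compat; lra |].
  pose proof (Rmin_l (mv / 2) (Rmin (Xs / 4) (Ys / (8 * q)))).
  pose proof (Rmin_r (mv / 2) (Rmin (Xs / 4) (Ys / (8 * q)))).
  pose proof (Rmin_l (Xs / 4) (Ys / (8 * q))). pose proof (Rmin_r (Xs / 4) (Ys / (8 * q))).
  assert (HkY : k * q <= Ys / 8).
  { assert (Hk8 : k <= Ys / (8 * q)) by lra. apply (Rmult_le_compat_r q) in Hk8; [|lra].
    replace (Ys / (8 * q) * q) with (Ys / 8) in Hk8 by (field; lra). exact Hk8. }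
  destruct (exists_small_radius (4 * Chv * (q * K + 2)) Ys 8 N (2 * (q * K)) Ivs)
    as [d0 [Hd0 Hsmall]]; [nra | lra | lra | lra | nra | lra |].
  exists q, K, k, d0. split; [exact Hd0|]. intros d Hd Hdd.
  destruct (Hsmall d Hd Hdd) as [HdY [HdN HdV]].
  unfold decay_constants. fold N a G.
  repeat split; try lra.
  - replace (a * q * K + 2 * a * G + Cvh * G) with (a * q * K + (2 * a * G + Cvh * G)) by ring.
    apply host_margin; fold Xs; try nra. apply exp_pos.
  - unfold Ys in HdY, HKY, HkY. nra.
Qed.

(** * Decay of solutions starting near the equilibrium *)

Section SolutionDecay.

Variables (bh bv mh mv Cvh Chv Shs Ihs Svs Ivs tau q K k d : R) (Sh Ih Sv Iv : R -> R).

Hypotheses (HCvh : 0 < Cvh) (HChv : 0 < Chv).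
Hypotheses (HShs : 0 < Shs) (HIhs : 0 < Ihs) (HSvs : 0 < Svs) (HIvs : 0 < Ivs)
  (Hbh : bh = mh * (Shs + Ihs)) (Hbv : bv = mv * (Svs + Ivs))
  (HIh_eq : Cvh * Ivs * Shs = mh * Ihs * (Svs + Ivs)) (HIv_eq : Chv * Ihs * Svs = mv * Ivs).
Hypothesis Htau : 0 <= tau.
Hypotheses (Hq : 0 < q) (HK : 1 < K) (HqK : 1 < q * K) (Hk : 0 < k) (Hkmv : k < mv) (Hkmh : k < mh).
Hypothesis Hhost_margin :
  exp (k * tau) * (Cvh * Shs / (Svs + Ivs) * q * K
                   + 2 * (Cvh * Shs / (Svs + Ivs)) * (2 * (Ivs / (Svs + Ivs)))
                   + Cvh * (2 * (Ivs / (Svs + Ivs)))) < (mh - k) * K.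
Hypotheses (Hd : 0 < d)
  (Hvector_margin :
     Chv * (Svs + 2 * d) * K + 2 * Chv * Ihs < (Chv * (Ihs - K * d) + mv - k) * q * K)
  (HdN : 8 * d <= Svs + Ivs) (HdV : q * K * d <= Ivs / 2).
Hypotheses (HcSh : cont_from (- tau) Sh) (HcIh : cont_from (- tau) Ih)
  (HcSv : cont_from (- tau) Sv) (HcIv : cont_from (- tau) Iv).
Hypothesis Hder : forall t, 0 < t ->
  derivable_pt_lim Sh t (f_Sh bh mh Cvh (Sh t) (Sv t) (Iv t)) /\
  derivable_pt_lim Ih t (f_Ih mh Cvh (Ih t) (Sh (t - tau)) (Sv (t - tau)) (Iv (t - tau))) /\
  derivable_pt_lim Sv t (f_Sv bv mv Chv (Ih t) (Sv t)) /\
  derivable_pt_lim Iv t (f_Iv mv Chv (Ih t) (Sv t) (Iv t)).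
Hypothesis Hhist : forall th, - tau <= th <= 0 ->
  Rabs (Sh th - Shs) < d /\ Rabs (Ih th - Ihs) < d /\
  Rabs (Sv th - Svs) < d /\ Rabs (Iv th - Ivs) < d.

Lemma cont_from_0 f : cont_from (- tau) f -> cont_from 0 f.
Proof. apply cont_from_le. lra. Qed.

Lemma vector_total_bound t :
  0 <= t -> Rabs (Sv t + Iv t - (Svs + Ivs)) < envelope (2 * d) k t.
Proof.
  apply (linear_decay_bound (fun t => Sv t + Iv t - (Svs + Ivs)) mv); [lra | | |].
  - apply cont_from_plus; [|apply cont_from_const].
    apply cont_from_plus; apply cont_from_0; assumption.
  - intros s Hs. destruct (Hder s Hs) as [_ [_ [HSv HIv]]].
    replace (- mv * (Sv s + Iv s - (Svs + Ivs)))
      with (f_Sv bv mv Chv (Ih s) (Sv s) + f_Iv mv Chv (Ih s) (Sv s) (Iv s))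
      by (unfold f_Sv, f_Iv; rewrite Hbv; ring).
    apply derivable_pt_lim_sub_const, (derivable_pt_lim_plus Sv Iv); assumption.
  - destruct (Hhist 0 ltac:(lra)) as [_ [_ [H3 H4]]].
    replace (Sv 0 + Iv 0 - (Svs + Ivs)) with ((Sv 0 - Svs) + (Iv 0 - Ivs)) by ring.
    pose proof (Rabs_triang (Sv 0 - Svs) (Iv 0 - Ivs)). lra.
Qed.

Lemma vector_total_history_bound s :
  - tau <= s -> Rabs (Sv s + Iv s - (Svs + Ivs)) <= envelope (2 * d) k s /\
                Rabs (Sv s + Iv s - (Svs + Ivs)) <= 2 * d.
Proof.
  intros Hs. apply history_envelope_bound; [lra | lra | |].
  - intros Hs0. destruct (Hhist s ltac:(lra)) as [_ [_ [H3 H4]]].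
    replace (Sv s + Iv s - (Svs + Ivs)) with ((Sv s - Svs) + (Iv s - Ivs)) by ring.
    pose proof (Rabs_triang (Sv s - Svs) (Iv s - Ivs)). lra.
  - intros Hs0. left. apply vector_total_bound, Hs0.
Qed.

Lemma host_total_bound c :
  Rabs (Sh 0 + Ih tau - (Shs + Ihs)) < c -> forall t, 0 <= t ->
  Rabs (Sh t + Ih (t + tau) - (Shs + Ihs)) < envelope c k t.
Proof.
  intros Hc.
  apply (linear_decay_bound (fun t => Sh t + Ih (t + tau) - (Shs + Ihs)) mh); [lra | | |].
  - apply cont_from_plus; [apply cont_from_plus | apply cont_from_const].
    + apply cont_from_0, HcSh.
    + apply cont_from_shift; [exact Htau | apply cont_from_0, HcIh].
  - intros s Hs. destruct (Hder s Hs) as [HSh _].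
    destruct (Hder (s + tau) ltac:(lra)) as [_ [HIh _]].
    replace (s + tau - tau) with s in HIh by ring.
    (* The incidence terms of [f_Sh] and of the delayed [f_Ih] cancel. *)
    replace (- mh * (Sh s + Ih (s + tau) - (Shs + Ihs)))
      with (f_Sh bh mh Cvh (Sh s) (Sv s) (Iv s) + f_Ih mh Cvh (Ih (s + tau)) (Sh s) (Sv s) (Iv s))
      by (unfold f_Sh, f_Ih; rewrite Hbh; ring).
    apply derivable_pt_lim_sub_const, (derivable_pt_lim_plus Sh (fun s => Ih (s + tau))).
    + exact HSh.
    + apply derivable_pt_lim_shift, HIh.
  - now rewrite Rplus_0_l.
Qed.

Lemma host_total_initial :
  Rabs (Ih tau - Ihs) <= envelope (K * d) k tau ->
  Rabs (Sh 0 + Ih tau - (Shs + Ihs)) < d + envelope (K * d) k tau.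
Proof.
  intros Htau_bound. destruct (Hhist 0 ltac:(lra)) as [H1 _].
  replace (Sh 0 + Ih tau - (Shs + Ihs)) with ((Sh 0 - Shs) + (Ih tau - Ihs)) by ring.
  pose proof (Rabs_triang (Sh 0 - Shs) (Ih tau - Ihs)). lra.
Qed.

Section Touching.

Variable t1 : R.
Hypothesis Ht1 : 0 < t1.
Hypothesis Hupto : forall s, 0 <= s <= t1 ->
  Rabs (Ih s - Ihs) <= envelope (K * d) k s /\ Rabs (Iv s - Ivs) <= envelope (q * K * d) k s.

Lemma delayed_Iv_bound :
  Rabs (Iv (t1 - tau) - Ivs) <= envelope (q * K * d) k (t1 - tau) /\
  Rabs (Iv (t1 - tau) - Ivs) <= q * K * d.
Proof.
  apply history_envelope_bound; [nra | lra | |].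
  - intros Hs. destruct (Hhist (t1 - tau) ltac:(lra)) as [_ [_ [_ H4]]]. nra.
  - intros Hs. apply Hupto. lra.
Qed.

Lemma delayed_host_bound :
  Rabs (Sh (t1 - tau) - Shs + (Ih t1 - Ihs)) <= (d * exp (k * tau) + K * d) * exp (- k * t1).
Proof.
  destruct (Rle_dec t1 tau) as [Hle|Hgt].
  - destruct (Hhist (t1 - tau) ltac:(lra)) as [H1 _].
    destruct (Hupto t1 ltac:(lra)) as [H2 _].
    pose proof (envelope_ge d k (t1 - tau) ltac:(lra) ltac:(lra) ltac:(lra)) as Hge.
    rewrite envelope_shift in Hge. unfold envelope in H2, Hge.
    pose proof (Rabs_triang (Sh (t1 - tau) - Shs) (Ih t1 - Ihs)). lra.
  - destruct (Hupto tau ltac:(lra)) as [Htau_bound _].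
    pose proof (host_total_bound _ (host_total_initial Htau_bound) (t1 - tau) ltac:(lra)) as Hw.
    replace (t1 - tau + tau) with t1 in Hw by ring.
    replace (Sh (t1 - tau) - Shs + (Ih t1 - Ihs))
      with (Sh (t1 - tau) + Ih t1 - (Shs + Ihs)) by ring.
    rewrite envelope_shift in Hw. unfold envelope in Hw.
    replace ((d * exp (k * tau) + K * d) * exp (- k * t1))
      with (exp (k * tau) * ((d + K * d * exp (- k * tau)) * exp (- k * t1))); [lra|].
    replace (- k * tau) with (- (k * tau)) by ring. rewrite exp_Ropp.
    field. apply Rgt_not_eq, exp_pos.
Qed.

Lemma Ih_inward :
  Rabs (Ih t1 - Ihs) = envelope (K * d) k t1 -> inward_at k (fun t => Ih t - Ihs) t1.
Proof.
  intros Htouch.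
  destruct delayed_Iv_bound as [Hy Hy'].
  destruct (vector_total_history_bound (t1 - tau) ltac:(lra)) as [Hn Hn'].
  rewrite envelope_shift in Hy, Hn. unfold envelope in Htouch, Hy, Hn.
  destruct (Hder t1 Ht1) as [_ [HIh _]].
  exists (f_Ih mh Cvh (Ih t1) (Sh (t1 - tau)) (Sv (t1 - tau)) (Iv (t1 - tau))).
  split; [apply derivable_pt_lim_sub_const, HIh|].
  pose proof (Rabs_le_inv _ _ Hn') as Hn''.
  rewrite (f_Ih_deviation mh Cvh Shs Ihs Ivs (Svs + Ivs)); [| lra | lra | exact HIh_eq].
  apply (host_inward_estimate mh Cvh k _ (2 * (Ivs / (Svs + Ivs))) q K d
           (exp (k * tau)) (exp (- k * t1))); try lra.
  - apply Rdiv_lt_0_compat; nra.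
  - left. apply exp_pos.
  - apply exp_pos.
  - apply incidence_bounds; lra.
  - apply delayed_host_bound.
Qed.

Lemma Iv_inward :
  Rabs (Iv t1 - Ivs) = envelope (q * K * d) k t1 -> inward_at k (fun t => Iv t - Ivs) t1.
Proof.
  intros Htouch.
  destruct (Hupto t1 ltac:(lra)) as [Hx _].
  pose proof (vector_total_bound t1 ltac:(lra)) as Hn.
  unfold envelope in Htouch, Hx, Hn.
  destruct (Hder t1 Ht1) as [_ [_ [_ HIv]]].
  exists (f_Iv mv Chv (Ih t1) (Sv t1) (Iv t1)).
  split; [apply derivable_pt_lim_sub_const, HIv|].
  rewrite (f_Iv_deviation mv Chv Ihs Svs Ivs _ _ _ HIv_eq).
  apply (vector_inward_estimate Chv mv k Ihs Svs q K d (exp (- k * t1))); try lra.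
  - apply exp_pos.
  - apply exp_decay_le_1; lra.
Qed.

End Touching.

Lemma infected_bound t : 0 <= t ->
  Rabs (Ih t - Ihs) < envelope (K * d) k t /\ Rabs (Iv t - Ivs) < envelope (q * K * d) k t.
Proof.
  destruct (Hhist 0 ltac:(lra)) as [_ [H2 [_ H4]]].
  apply (envelope_barrier2 (fun t => Ih t - Ihs) (fun t => Iv t - Ivs)); try nra.
  - apply cont_from_plus; [apply cont_from_0, HcIh | apply cont_from_const].
  - apply cont_from_plus; [apply cont_from_0, HcIv | apply cont_from_const].
  - intros t1 Ht1 Hupto. split; [apply Ih_inward | apply Iv_inward]; assumption.
Qed.

Lemma solution_decay t : 0 <= t ->
  close_to (Shs, Ihs, Svs, Ivs) ((3 + 2 * K + q * K) * d * exp (- k * t))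
    (Sh t) (Ih t) (Sv t) (Iv t).
Proof.
  intros Ht. simpl.
  destruct (infected_bound t Ht) as [Hx Hy].
  destruct (infected_bound tau Htau) as [Hx_tau _].
  destruct (infected_bound (t + tau) ltac:(lra)) as [Hx_shift _].
  pose proof (host_total_bound _ (host_total_initial (Rlt_le _ _ Hx_tau)) t Ht) as Hw.
  pose proof (vector_total_bound t Ht) as Hn.
  pose proof (exp_decay_le_1 k tau ltac:(lra) Htau) as Htau1.
  unfold envelope in *.
  replace (- k * (t + tau)) with (- k * tau + - k * t) in Hx_shift by ring.
  rewrite exp_plus in Hx_shift.
  set (e := exp (- k * t)) in *. assert (He : 0 < e) by apply exp_pos.
  assert (Hde : 0 < d * e) by nra. assert (HKde : 0 < K * d * e) by nra.
  assert (HqKde : 0 < q * K * d * e) by nra.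
  assert (Hdelay : K * d * (exp (- k * tau) * e) <= K * d * e)
    by (rewrite <- (Rmult_1_l e) at 2; apply Rmult_le_compat_l; [nra | apply Rmult_le_compat_r; lra]).
  assert (Hinit : (d + K * d * exp (- k * tau)) * e <= (d + K * d) * e).
  { apply Rmult_le_compat_r; [lra|]. enough (K * d * exp (- k * tau) <= K * d) by lra.
    rewrite <- (Rmult_1_r (K * d)) at 2. apply Rmult_le_compat_l; nra. }
  replace (Sh t - Shs) with ((Sh t + Ih (t + tau) - (Shs + Ihs)) + - (Ih (t + tau) - Ihs)) by ring.
  replace (Sv t - Svs) with ((Sv t + Iv t - (Svs + Ivs)) + - (Iv t - Ivs)) by ring.
  pose proof (Rabs_triang (Sh t + Ih (t + tau) - (Shs + Ihs)) (- (Ih (t + tau) - Ihs))).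
  pose proof (Rabs_triang (Sv t + Iv t - (Svs + Ivs)) (- (Iv t - Ivs))).
  rewrite Rabs_Ropp in *.
  repeat split; lra.
Qed.

End SolutionDecay.

Definition locally_exponentially_stable (bh bv mh mv Cvh Chv tau : R) (E : R * R * R * R) : Prop :=
  exists M k d0, 0 < M /\ 0 < k /\ 0 < d0 /\
    forall d, 0 < d -> d <= d0 -> forall Sh Ih Sv Iv : R -> R,
      is_solution bh bv mh mv Cvh Chv tau Sh Ih Sv Iv ->
      (forall th, - tau <= th <= 0 -> close_to E d (Sh th) (Ih th) (Sv th) (Iv th)) ->
      forall t, 0 <= t -> close_to E (M * d * exp (- k * t)) (Sh t) (Ih t) (Sv t) (Iv t).

Lemma close_to_le E r r' a b c e : r <= r' -> close_to E r a b c e -> close_to E r' a b c e.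
Proof. destruct E as [[[sh ih] sv] iv]. simpl. intros Hr. lra. Qed.

Lemma locally_exponentially_stable_las bh bv mh mv Cvh Chv tau E :
  locally_exponentially_stable bh bv mh mv Cvh Chv tau E ->
  locally_asymptotically_stable bh bv mh mv Cvh Chv tau E.
Proof.
  intros [M [k [d0 [HM [Hk [Hd0 Hdecay]]]]]]. split.
  - intros eps Heps.
    set (delta := Rmin d0 (eps / M)).
    assert (Hdelta : 0 < delta) by (apply Rmin_pos; [lra | apply Rdiv_lt_0_compat; lra]).
    exists delta. split; [exact Hdelta|]. intros Sh Ih Sv Iv Hsol _ Hhist t Ht.
    apply (close_to_le _ (M * delta * exp (- k * t)));
      [|exact (Hdecay delta Hdelta (Rmin_l _ _) _ _ _ _ Hsol Hhist t Ht)].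
    assert (Hdelta_eps : M * delta <= eps).
    { pose proof (Rmin_r d0 (eps / M)) as H. apply (Rmult_le_compat_l M) in H; [|lra].
      replace (M * (eps / M)) with eps in H by (field; lra). exact H. }
    pose proof (exp_decay_le_1 k t ltac:(lra) Ht). pose proof (exp_pos (- k * t)). nra.
  - exists d0. split; [exact Hd0|]. intros Sh Ih Sv Iv Hsol _ Hhist eps Heps.
    exists (M * d0 / (eps * k)). intros t Ht.
    assert (HT : 0 < M * d0 / (eps * k)) by (apply Rdiv_lt_0_compat; nra).
    apply (close_to_le _ (M * d0 * exp (- k * t)));
      [|exact (Hdecay d0 Hd0 (Rle_refl _) _ _ _ _ Hsol Hhist t ltac:(lra))].
    assert (Hkt : M * d0 <= eps * (k * t)).
    { apply (Rmult_le_compat_l (eps * k)) in Ht; [|nra].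
      replace (eps * k * (M * d0 / (eps * k))) with (M * d0) in Ht by (field; lra). lra. }
    replace (- k * t) with (- (k * t)) by ring. rewrite exp_Ropp.
    pose proof (exp_ineq1 (k * t) ltac:(nra)) as Hexp.
    apply (Rmult_le_reg_r (exp (k * t))); [apply exp_pos|].
    field_simplify; [nra | apply Rgt_not_eq, exp_pos].
Qed.

Lemma endemic_relations_exponentially_stable bh bv mh mv Cvh Chv Shs Ihs Svs Ivs tau :
  0 < mh -> 0 < mv -> 0 < Cvh -> 0 < Chv -> 0 <= tau ->
  endemic_relations bh bv mh mv Cvh Chv Shs Ihs Svs Ivs ->
  locally_exponentially_stable bh bv mh mv Cvh Chv tau (Shs, Ihs, Svs, Ivs).
Proof.
  intros Hmh Hmv HCvh HChv Htau Hrel.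
  pose proof Hrel as [HShs [HIhs [HSvs [HIvs [Hbh [Hbv [HIh HIv]]]]]]].
  destruct (decay_constants_exist mh mv Cvh Chv Shs Ihs Svs Ivs tau)
    as [q [K [k [d0 [Hd0 Hconst]]]]]; try assumption.
  destruct (Hconst d0 Hd0 (Rle_refl _)) as [Hq [HK [HqK [Hk _]]]].
  exists (3 + 2 * K + q * K), k, d0. split; [nra|]. split; [exact Hk|]. split; [exact Hd0|].
  intros d Hd Hdd Sh Ih Sv Iv [HcSh [HcIh [HcSv [HcIv Hder]]]] Hhist.
  destruct (Hconst d Hd Hdd) as [_ [_ [_ [_ [Hkmv [Hkmh [Hhost [_ [Hvector [HdN HdV]]]]]]]]]].
  apply (solution_decay bh bv mh mv Cvh Chv Shs Ihs Svs Ivs tau q K k d Sh Ih Sv Iv); assumption.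
Qed.

Theorem theorem3 (bh bv mh mv Cvh Chv : R) :
  0 < bh -> 0 < bv -> 0 < mh -> 0 < mv -> 0 < Cvh -> 0 < Chv ->
  1 < basic_R0 bh mh mv Cvh Chv ->
  exists E : R * R * R * R,
    endemic_equilibrium bh bv mh mv Cvh Chv E /\
    (forall E', endemic_equilibrium bh bv mh mv Cvh Chv E' -> E' = E) /\
    (forall tau, 0 <= tau -> locally_asymptotically_stable bh bv mh mv Cvh Chv tau E).
Proof.
  intros Hbh Hbv Hmh Hmv HCvh HChv HR0.
  destruct (endemic_relations_exist bh bv mh mv Cvh Chv) as [Shs [Ihs [Svs [Ivs Hrel]]]];
    try assumption.
  exists (Shs, Ihs, Svs, Ivs). split; [|split].
  - apply endemic_equilibrium_relations, Hrel.
  - intros [[[sh ih] sv] iv] Hendemic. apply endemic_equilibrium_relations in Hendemic.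
    destruct (endemic_relations_unique _ _ _ _ _ _ _ _ _ _ _ _ _ _ Hmh Hmv HCvh HChv Hrel Hendemic)
      as [-> [-> [-> ->]]].
    reflexivity.
  - intros tau Htau.
    apply locally_exponentially_stable_las, endemic_relations_exponentially_stable; assumption.
Qed.
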